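(* Fix $N=\{1,\dots,n\}$ and $N_0=N\cup\{0\}$, and let $RS^{N_0}$ be the class of RS-games with player set $N_0$. There is a unique solution $\xi$ on $RS^{N_0}$ satisfying (EF), (SR), (RR) and (PD), namely \[\xi_0(v)=n\beta,\qquad \xi_i(v)=v(\{0,i\})-\beta\ \ (i\in N),\qquad\text{where }\beta=\min_{S\subseteq N,\,S\neq\emptyset}\frac{v(S_0)-v(S)}{s}.\] Here, for a solution $\varphi$ and every $v\in RS^{N_0}$: (EF) $\sum_{i\in N_0}\varphi_i(v)=v(N_0)$; (SR) $\sum_{i\in S}\varphi_i(v)\ge v(S)$ for all coalitions $S\subseteq N$; (RR) for every $i\in N$ there is a nonempty coalition $S^i\subseteq N$ with $\varphi_i(v)=v(\{0,i\})-\frac{v(S^i_0)-v(S^i)}{s^i}$, where $s^i=|S^i|$; (PD) $\varphi_i(v)-\varphi_j(v)=v(\{0,i\})-v(\{0,j\})$ for all $i,j\in N$ with $i\neq j$.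
   Context: Let $c\in\mathbb{R}$. An RS-problem is a triple $(c,w,p)$ where $w:\mathbb{R}_+\to(c,+\infty)$ is decreasing (non-increasing) and continuous, and $p:\mathbb{R}_+\to\mathbb{R}$ is decreasing (non-increasing) and continuous, satisfies $p(0)>w(0)$, and there exists $q>0$ with $p(q)=c$. An RS-situation is a tuple $(N_0,c,w,P)$ where $N=\{1,\dots,n\}$ is the set of retailers, $0$ denotes the supplier, $N_0=N\cup\{0\}$, $P=(p_1,\dots,p_n)$, and $(c,w,p_i)$ is an RS-problem for each $i\in N$. For $S\subseteq N$ write $S_0=S\cup\{0\}$ and $s=|S|$. For $q\ge0$ and $\omega\in\mathbb{R}$, $\Pi_i^{ret}(q;\omega)=(p_i(q)-\omega)q$. For nonempty $S\subseteq N$, $(q_i^S)_{i\in S}$ is a fixed optimal solution of: maximize $\sum_{i\in S}(p_i(q_i)-w(q_S))q_i$ over $q\in\mathbb{R}_+^{S}$ subject to $p_i(q_i)\ge w(q_S)$ for all $i\in S$, where $q_S=\sum_{i\in S}q_i$; $q_S^S=\sum_{i\in S}q_i^S$. For $i\in N$, $q_i^c$ is a fixed optimal solution of: maximize $(p_i(q)-c)q$ over $q\ge0$ subject to $p_i(q)\ge c$. The corresponding RS-game $(N_0,v)$ is the TU game on $N_0$ with $v(\emptyset)=0$ and, for all $S\subseteq N$, $v(S)=\sum_{i\in S}\Pi_i^{ret}(q_i^S;w(q_S^S))$ and $v(S_0)=\sum_{i\in S}\Pi_i^{ret}(q_i^c;c)$. A (single-valued) solution on $RS^{N_0}$ is a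 map $\varphi$ assigning to each $v\in RS^{N_0}$ a vector $\varphi(v)=(\varphi_i(v))_{i\in N_0}\in\mathbb{R}^{N_0}$. *)

From HB Require Import structures.
From mathcomp Require Import all_boot all_order all_algebra.
From mathcomp Require Import all_classical all_reals all_analysis.
Set Implicit Arguments. Unset Strict Implicit. Unset Printing Implicit Defensive.
Import Order.TTheory GRing.Theory Num.Theory.
Import numFieldNormedType.Exports.

Local Open Scope ring_scope.

(* Players are 'I_n.+1; player ord0 is the supplier 0, players i != ord0 are
   the retailers N = {1,...,n}.  A coalition is a {set 'I_n.+1}; a coalition
   S is a subset of N iff ord0 \notin S, and S_0 = ord0 |: S. *)

Section RS.
Variable R : realType.

Definition nonincr_Rplus (f : R -> R) : Prop :=
  forall x y, 0 <= x -> x <= y -> f y <= f x.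

Definition cont_Rplus (f : R -> R) : Prop :=
  {within `[0, +oo[%classic, continuous f}%classic.

Definition RS_problem (c : R) (w p : R -> R) : Prop :=
  [/\ (forall x, 0 <= x -> c < w x), nonincr_Rplus w & cont_Rplus w] /\
  [/\ nonincr_Rplus p, cont_Rplus p, w 0 < p 0 &
      exists q, 0 < q /\ p q = c].

Variable n : nat.
Notation player := 'I_n.+1.
Notation retailer i := (i != (ord0 : player)).

Definition RS_situation (c : R) (w : R -> R) (P : player -> R -> R) : Prop :=
  forall i : player, retailer i -> RS_problem c w (P i).

Definition Pi_ret (p : R -> R) (q om : R) : R := (p q - om) * q.

Definition qtot (S : {set player}) (q : player -> R) : R := \sum_(i in S) q i.

Definition feasible_S (w : R -> R) (P : player -> R -> R) (S : {set player})
  (q : player -> R) : Prop :=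
  forall i, i \in S -> 0 <= q i /\ w (qtot S q) <= P i (q i).

Definition obj_S (w : R -> R) (P : player -> R -> R) (S : {set player})
  (q : player -> R) : R :=
  \sum_(i in S) Pi_ret (P i) (q i) (w (qtot S q)).

Definition optimal_S (w : R -> R) (P : player -> R -> R) (S : {set player})
  (q : player -> R) : Prop :=
  feasible_S w P S q /\
  forall q' : player -> R, feasible_S w P S q' -> obj_S w P S q' <= obj_S w P S q.

Definition optimal_c (c : R) (p : R -> R) (q : R) : Prop :=
  (0 <= q /\ c <= p q) /\
  forall q', 0 <= q' -> c <= p q' -> Pi_ret p q' c <= Pi_ret p q c.

(* the RS-game associated with the RS-situation (N_0,c,w,P) and the fixed
   optimal solutions qS (q^S for each nonempty S ⊆ N) and qc (q^c_i) *)
Definition RS_game_of (c : R) (w : R -> R) (P : player -> R -> R)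
  (qS : {set player} -> player -> R) (qc : player -> R) : {set player} -> R :=
  fun T =>
    if ord0 \in T then \sum_(i in T | retailer i) Pi_ret (P i) (qc i) c
    else \sum_(i in T) Pi_ret (P i) (qS T i) (w (qtot T (qS T))).

Definition RS_game (v : {set player} -> R) : Prop :=
  exists c w P qS qc,
    [/\ RS_situation c w P,
        (forall S : {set player}, ord0 \notin S -> S != finset.set0 ->
           optimal_S w P S (qS S)),
        (forall i : player, retailer i -> optimal_c c (P i) (qc i)) &
        v = RS_game_of c w P qS qc].

Definition solution := ({set player} -> R) -> player -> R.

Definition EF (phi : solution) : Prop :=
  forall v, RS_game v -> \sum_(i : player) phi v i = v [set: player].

Definition SR (phi : solution) : Prop :=
  forall v, RS_game v -> forall S : {set player}, ord0 \notin S ->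
    v S <= \sum_(i in S) phi v i.

Definition RR (phi : solution) : Prop :=
  forall v, RS_game v -> forall i : player, retailer i ->
    exists Si : {set player}, [/\ ord0 \notin Si, Si != finset.set0 &
      phi v i = v [set ord0; i] - (v (ord0 |: Si) - v Si) / #|Si|%:R].

Definition PD (phi : solution) : Prop :=
  forall v, RS_game v -> forall i j : player, retailer i -> retailer j -> i != j ->
    phi v i - phi v j = v [set ord0; i] - v [set ord0; j].

(* beta = min over nonempty S ⊆ N of (v(S_0) - v(S)) / s.  The big min is
   seeded with the value at the nonempty coalition {1} (a member of the range
   when n >= 1), so it is the true minimum. *)
Definition beta_ratio (v : {set player} -> R) (S : {set player}) : R :=
  (v (ord0 |: S) - v S) / #|S|%:R.

Definition beta (v : {set player} -> R) : R :=
  \big[Order.min/beta_ratio v [set inord 1]]_(S : {set player} | (ord0 \notin S) && (S != finset.set0))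
     beta_ratio v S.

Definition xi : solution := fun v i =>
  if i == ord0 then n%:R * beta v else v [set ord0; i] - beta v.

End RS.

(* In an RS-game every coalition containing the supplier is worth the sum of
   the two-player values v({0,i}) of its retailers.  Under (PD) a solution
   therefore pays every retailer v({0,i}) - b for one common discount b, and
   on such payoffs (SR) says exactly b <= (v(S_0) - v(S)) / s for all S, i.e.
   b <= beta, (RR) says that b is one of these ratios, hence b >= beta, and
   (EF) fixes the supplier's payoff at n b. *)
From HB Require Import structures.
From mathcomp Require Import all_boot all_order all_algebra.
From mathcomp Require Import all_classical all_reals all_analysis.
From mathcomp Require Import lra.
Set Implicit Arguments. Unset Strict Implicit. Unset Printing Implicit Defensive.
Import Order.TTheory GRing.Theory Num.Theory.
Local Open Scope ring_scope.

Section RSGames.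
Variables (R : realType) (n : nat).
Notation player := 'I_n.+1.
Implicit Types (v : {set player} -> R) (S : {set player}) (b : R).

Definition retailer_coalition S := (ord0 \notin S) && (S != finset.set0).

Definition supplier_additive v :=
  v finset.set0 = 0 /\
  forall S, ord0 \notin S -> v (ord0 |: S) = \sum_(i in S) v [set ord0; i].

Lemma RS_game_supplier_additive v : RS_game v -> supplier_additive v.
Proof.
case=> c [w [P [qS [qc [_ _ _ ->]]]]].
have valS0 S : ord0 \notin S ->
    RS_game_of c w P qS qc (ord0 |: S) = \sum_(i in S) Pi_ret (P i) (qc i) c.
  move=> S0; rewrite /RS_game_of setU11; apply: eq_bigl => i.
  by rewrite !inE; case: (eqVneq i ord0) => [->|]; rewrite ?(negbTE S0) ?andbT.
split; first by rewrite /RS_game_of finset.in_set0 finset.big_set0.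
move=> S S0; rewrite valS0 //; apply: eq_bigr => i iS.
have i0 : ord0 \notin [set i] by rewrite finset.in_set1; apply: contraNneq S0 => ->.
by rewrite valS0 // big_set1.
Qed.

Lemma inord1_neq0 : (0 < n)%N -> (inord 1 : player) != ord0.
Proof. by move=> n_gt0; apply/eqP => /(congr1 val) /=; rewrite inordK. Qed.

Lemma retailer_coalition1 : (0 < n)%N -> retailer_coalition [set inord 1].
Proof.
move=> n_gt0; rewrite /retailer_coalition finset.in_set1 -cards_eq0 cards1 andbT.
by rewrite eq_sym inord1_neq0.
Qed.

Lemma card_retailer_coalition_gt0 S : retailer_coalition S -> 0 < (#|S|%:R : R).
Proof. by case/andP => _ S_neq0; rewrite ltr0n lt0n cards_eq0. Qed.

Lemma beta_le_ratio v S : retailer_coalition S -> beta v <= beta_ratio v S.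
Proof. exact: bigmin_le_cond. Qed.

Lemma beta_attained v : (0 < n)%N ->
  exists2 S, retailer_coalition S & beta v = beta_ratio v S.
Proof.
move=> n_gt0; rewrite /beta.
apply: (big_ind (fun x => exists2 S, retailer_coalition S & x = beta_ratio v S))
  => [|x y [S1 ? ->] [S2 ? ->]|S ?].
- by exists [set inord 1]; first exact: retailer_coalition1.
- by rewrite /Order.min; case: ifP => _; [exists S1 | exists S2].
- by exists S.
Qed.

Lemma le_beta v b : (0 < n)%N ->
  (forall S, retailer_coalition S -> b <= beta_ratio v S) -> b <= beta v.
Proof. by move=> n_gt0 le_b; have [S /le_b + ->] := beta_attained v n_gt0. Qed.

Section DiscountedPayoff.
Variables (v : {set player} -> R) (x : player -> R) (b : R).
Hypothesis v_additive : supplier_additive v.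
Hypothesis x_discount : forall i, i != ord0 -> x i = v [set ord0; i] - b.

Lemma sum_discounted_payoff S : ord0 \notin S ->
  \sum_(i in S) x i = v (ord0 |: S) - #|S|%:R * b.
Proof.
move=> S0; rewrite v_additive.2 // mulr_natl -sumr_const -sumrB.
apply: eq_bigr => i iS; apply: x_discount.
by apply: contraNneq S0 => <-.
Qed.

Lemma discounted_payoff_stableP : (0 < n)%N ->
  (forall S, ord0 \notin S -> v S <= \sum_(i in S) x i) <-> b <= beta v.
Proof.
have stableE S : retailer_coalition S ->
    (v S <= \sum_(i in S) x i) = (b <= beta_ratio v S).
  move=> S_ret; have /andP[S0 _] := S_ret.
  rewrite sum_discounted_payoff // /beta_ratio.
  rewrite ler_pdivlMr ?card_retailer_coalition_gt0 //.
  by apply/idP/idP => ?; lra.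
move=> n_gt0; split=> [stable|le_b S S0].
  by apply: le_beta => // S S_ret; rewrite -stableE ?stable //; case/andP: S_ret.
have [->|S_neq0] := eqVneq S finset.set0.
  by rewrite v_additive.1 finset.big_set0.
have S_ret : retailer_coalition S by rewrite /retailer_coalition S0 S_neq0.
by rewrite stableE // (le_trans le_b) ?beta_le_ratio.
Qed.

Lemma discounted_payoff_efficientE :
  (\sum_i x i = v [set: player]) <-> x ord0 = n%:R * b.
Proof.
have setTE : [set: player] = ord0 |: [set~ ord0] by rewrite finset.setUCr.
have sumE : \sum_i x i = x ord0 + \sum_(i in [set~ ord0]) x i.
  by rewrite (bigD1 ord0) //=; congr (_ + _); apply: eq_bigl => i; rewrite in_setC1.
rewrite sumE sum_discounted_payoff ?setC11 // -setTE cardsC1 card_ord /=.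
by split=> E; lra.
Qed.

Lemma beta_le_discount i S : i != ord0 -> retailer_coalition S ->
  x i = v [set ord0; i] - beta_ratio v S -> beta v <= b.
Proof.
move=> i_ret S_ret; rewrite x_discount // => xE.
have -> : b = beta_ratio v S by lra.
exact: beta_le_ratio.
Qed.

End DiscountedPayoff.

Lemma xi_retailer v i : i != ord0 -> xi v i = v [set ord0; i] - beta v.
Proof. by rewrite /xi => /negbTE ->. Qed.

Lemma pairwise_difference_discount (x : player -> R) v : (0 < n)%N ->
  (forall i j, i != ord0 -> j != ord0 -> i != j ->
     x i - x j = v [set ord0; i] - v [set ord0; j]) ->
  exists b, forall i, i != ord0 -> x i = v [set ord0; i] - b.
Proof.
move=> n_gt0 x_pd; set i1 : player := inord 1.
have i1_ret : i1 != ord0 := inord1_neq0 n_gt0.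
exists (v [set ord0; i1] - x i1) => i i_ret.
have [-> | i_neq] := eqVneq i i1; first lra.
by have := x_pd i i1 i_ret i1_ret i_neq; lra.
Qed.

End RSGames.

Theorem theorem6p1 (R : realType) (n : nat) (hn : (0 < n)%N) :
  (EF (@xi R n) /\ SR (@xi R n) /\ RR (@xi R n) /\ PD (@xi R n)) /\
  (forall phi : solution R n, EF phi -> SR phi -> RR phi -> PD phi ->
     forall v, RS_game v -> phi v = xi v).
Proof.
split; [split; [|split; [|split]] |].
- move=> v /RS_game_supplier_additive v_add.
  by apply/(discounted_payoff_efficientE v_add (xi_retailer v)); rewrite /xi eqxx.
- move=> v /RS_game_supplier_additive v_add.
  exact/(discounted_payoff_stableP v_add (xi_retailer v) hn).
- move=> v _ i i_ret; have [S /andP[S0 S_neq0] beta_ratioE] := beta_attained v hn.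
  by exists S; split=> //; rewrite xi_retailer // beta_ratioE.
- by move=> v _ i j i_ret j_ret _; rewrite !xi_retailer //; lra.
move=> phi phi_EF phi_SR phi_RR phi_PD v v_game.
have v_add := RS_game_supplier_additive v_game.
have [b phi_discount] := pairwise_difference_discount hn (phi_PD v v_game).
have b_le := (discounted_payoff_stableP v_add phi_discount hn).1 (phi_SR v v_game).
have le_b : beta v <= b.
  have [S [S0 S_neq0 phiE]] := phi_RR v v_game _ (inord1_neq0 hn).
  have S_ret : retailer_coalition S by apply/andP.
  exact: (beta_le_discount phi_discount (inord1_neq0 hn) S_ret phiE).
have b_eq : b = beta v by apply/eqP; rewrite eq_le b_le le_b.
apply: funext => i; have [->|i_ret] := eqVneq i ord0.
  rewrite /xi eqxx -b_eq.
  exact/(discounted_payoff_efficientE v_add phi_discount)/phi_EF.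
by rewrite xi_retailer // phi_discount // b_eq.
Qed.
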